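(* Let $C\subseteq 2^X$ be an ample class and $r:C\to X(C)$ a representation map. Then: (C1) for every $c\in C$, the cube of $2^X$ with support $r(c)$ that contains $c$ is contained in $C$ (i.e. all out-neighbours of $c$ under $o_r$ belong to a cube of $C$); (C2) for every cube $B$ of $C$, there is a unique $c\in B$ with $r(c)\cap\mathrm{supp}(B)=\varnothing$, i.e. $c$ is the unique sink of $o_r$ restricted to the edges of $B$; consequently $o_r$ is a unique sink orientation on each cube of $C$.
   Context: $X$ is finite; concepts are identified with characteristic functions; $C|Y=\{c|Y:c\in C\}$; $Y$ is shattered by $C$ if $C|Y=2^Y$. A cube of $2^X$ is $\{T\cup Z:Z\subseteq Y\}$, $Y\subseteq X$, $T\subseteq X\setminus Y$, support $\mathrm{supp}=Y$; a cube of $C$ is one contained in $C$. $C$ is ample if every shattered set is the support of a cube of $C$; $X(C)$ is the family of shattered sets. A representation map is a bijection $r:C\to X(C)$ with $c|(r(c)\cup r(c'))\ne c'|(r(c)\cup r(c'))$ for all distinct $c,c'$. For a representation map and any two concepts $c,c'\in C$ with $c\Delta c'=\{x\}$, one has $r(c)\Delta r(c')=\{x\}$; the orientation $o_r$ of the graph $G(C)$ (edges between concepts at Hamming distance 1) orients such an edge from $c$ to $c'$ iff $x\in r(c)\setminus r(c')$. An orientation of a cube is a unique sink orientation if every subcube has exactly one sink (vertex with no outgoing edge inside that subcube). *)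

From mathcomp Require Import all_boot.
Set Implicit Arguments. Unset Strict Implicit. Unset Printing Implicit Defensive.

Section Defs.
Variable X : finType.
Implicit Types (C : {set {set X}}) (c Y T : {set X}).

Definition restr c Y : {set X} := c :&: Y.

Definition shattered C Y : bool := [set restr c Y | c in C] == powerset Y.

(* the cube {T ∪ Z : Z ⊆ Y} of 2^X (T is meant to be disjoint from Y) *)
Definition cube T Y : {set {set X}} := [set T :|: Z | Z in powerset Y].

Definition is_cube T Y : bool := [disjoint T & Y].

Definition cube_of C T Y : bool := is_cube T Y && (cube T Y \subset C).

Definition ample C : Prop :=
  forall Y, shattered C Y -> exists T, cube_of C T Y.

Definition shattered_sets C : {set {set X}} := [set Y | shattered C Y].

Definition representation_map C (r : {set X} -> {set X}) : Prop :=
  [/\ {in C &, injective r},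
      r @: C = shattered_sets C &
      {in C &, forall c c', c != c' ->
          restr c (r c :|: r c') != restr c' (r c :|: r c')}].

Definition oriented (r : {set X} -> {set X}) c c' : Prop :=
  exists x, (c :\: c') :|: (c' :\: c) = [set x] /\ x \in r c :\: r c'.

Definition sink (r : {set X} -> {set X}) (B : {set {set X}}) c : Prop :=
  c \in B /\ forall c', c' \in B -> ~ oriented r c c'.

Definition USO_on (r : {set X} -> {set X}) T Y : Prop :=
  forall T' Y', is_cube T' Y' -> cube T' Y' \subset cube T Y ->
    exists! c, sink r (cube T' Y') c.

End Defs.

From mathcomp Require Import all_boot.
Set Implicit Arguments. Unset Strict Implicit. Unset Printing Implicit Defensive.

(* A representation map is a bijection from C onto its shattered sets, so for
   every W the concepts d with r d \subset W are at least as many as the traces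
   of C on W (Sauer-Shelah-Pajor applied to the trace), while d |-> d :&: W is
   injective on them by the non-clashing condition: it is a bijection onto the
   trace.
   On a cube (T, Y), taking W = ~: Y :|: V, the concepts d of the cube with
   r d :&: Y \subset V are as many as the traces on V of the concepts of the cube.
   - V = set0 yields the unique concept of a cube of C whose representative
     misses Y; it is the unique sink, because W = ~: [set y] turns any
     y \in r d :&: Y into an out-neighbour of d in the cube.
   - For Y \subset r c, induction on #|Y| shows that the traces on every proper
     V \proper Y are all of powerset V; Moebius inversion then gives one concept
     with r d :&: Y = V for each such V, and c adds one with r c :&: Y = Y, so
     the cube through c with support Y has all its 2 ^ #|Y| points in C. *)

Section Shattering.
Variable X : finType.
Implicit Types (D : {set {set X}}) (U Y Z d e : {set X}).

Lemma shatteredP D Y :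
  reflect (forall Z, Z \subset Y -> exists2 d, d \in D & d :&: Y = Z) (shattered D Y).
Proof.
rewrite /shattered; apply: (iffP eqP) => [DY Z sZY | DY].
- have: Z \in powerset Y by rewrite powersetE.
  by rewrite -DY => /imsetP [d dD ->]; exists d.
- apply/setP => Z; rewrite powersetE; apply/imsetP/idP => [[d _ ->]|/DY [d dD <-]].
  + exact: subsetIr.
  + by exists d.
Qed.

Lemma shattered_subset D Y : shattered D Y -> exists2 d, d \in D & Y \subset d.
Proof. by move/shatteredP/(_ Y (subxx Y)) => [d dD dY]; exists d; rewrite // -dY subsetIl. Qed.

Lemma shattered_set0 D d : d \in D -> shattered D set0.
Proof.
by move=> dD; apply/shatteredP => Z; rewrite subset0 => /eqP ->; exists d; rewrite ?setI0.
Qed.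

Section SplitAlong.
Variables (D : {set {set X}}) (x : X).

Let Dout := [set d in D | x \notin d].
Let Din := [set d :\ x | d in D & x \in d].

Let sub_splitIU : Dout :&: Din \subset Dout :|: Din.
Proof. exact: subset_trans (subsetIl _ _) (subsetUl _ _). Qed.

Lemma card_split : #|D| = #|Dout :|: Din| + #|Dout :&: Din|.
Proof.
rewrite cardsUI -(cardsID [set d : {set X} | x \in d] D) addnC; congr (_ + _).
- by apply: eq_card => d; rewrite !inE andbC.
- rewrite /Din card_in_imset => [|d d']; first by apply: eq_card => d; rewrite !inE.
  rewrite !inE => /andP [_ xd] /andP [_ xd'] E.
  by rewrite -(setD1K xd) -(setD1K xd') E.
Qed.

Lemma notin_split d : d \in Dout :|: Din -> x \notin d.
Proof. by rewrite !inE => /orP [/andP [] //|/imsetP [e _ ->]]; rewrite !inE eqxx. Qed.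

Lemma notin_shattered_split D' Y : D' \subset Dout :|: Din -> shattered D' Y -> x \notin Y.
Proof.
move=> sD' /shattered_subset [d /(subsetP sD') /notin_split xd sYd].
by apply: contra xd; apply: (subsetP sYd).
Qed.

Lemma shattered_splitU Y : shattered (Dout :|: Din) Y -> shattered D Y.
Proof.
move=> shY; have xY := notin_shattered_split (subxx _) shY.
apply/shatteredP => Z /(shatteredP _ _ shY) [e].
rewrite !inE => /orP [/andP [eD _]|/imsetP [d]]; first by exists e.
rewrite inE => /andP [dD _] -> <-; exists d => //.
by apply/setP => z; rewrite !inE; case: eqP => // ->; rewrite (negbTE xY) !andbF.
Qed.

Lemma shattered_splitI Y : shattered (Dout :&: Din) Y -> shattered D (x |: Y).
Proof.
move=> shY; have xY := notin_shattered_split sub_splitIU shY.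
apply/shatteredP => Z sZ.
have sZx : Z :\ x \subset Y by rewrite subDset.
have [e] := shatteredP _ _ shY _ sZx.
rewrite !inE => /andP [/andP [eD xe] /imsetP [d]].
rewrite inE => /andP [dD xd] ede eZ.
have de : d = x |: e by rewrite ede setD1K.
case xZ: (x \in Z); [exists d | exists e] => //; apply/setP => z;
  move/setP: eZ => /(_ z); rewrite ?de !inE; case: eqP => [->|_] //= _.
by rewrite xZ (negbTE xe).
Qed.

Lemma subset_split U d :
  (forall e, e \in D -> e \subset U) -> d \in Dout :|: Din -> d \subset U :\ x.
Proof.
move=> sDU dS; rewrite subsetD1 (notin_split dS) andbT.
move: dS; rewrite !inE => /orP [/andP [/sDU //] _|/imsetP [e]].
by rewrite inE => /andP [/sDU eU _] ->; apply: subset_trans eU; apply: subsetDl.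
Qed.

Lemma card_shattered_split :
  #|shattered_sets (Dout :|: Din)| + #|shattered_sets (Dout :&: Din)|
    <= #|shattered_sets D|.
Proof.
rewrite -(cardsID [set Y : {set X} | x \notin Y] (shattered_sets D)); apply: leq_add.
- apply: subset_leq_card; apply/subsetP => Y; rewrite !inE => shY.
  by rewrite (notin_shattered_split (subxx _) shY) shattered_splitU.
- rewrite -[#|shattered_sets _|](card_in_imset (f := fun Y => x |: Y)) => [|Y Y'].
    apply: subset_leq_card; apply/subsetP => Y' /imsetP [Y]; rewrite !inE => shY ->.
    by rewrite shattered_splitI // setU11.
  rewrite !inE => /(notin_shattered_split sub_splitIU) xY.
  move=> /(notin_shattered_split sub_splitIU) xY' E.
  by rewrite -(setU1K xY) -(setU1K xY') E.
Qed.

End SplitAlong.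

Lemma pajor_sub U D : (forall d, d \in D -> d \subset U) -> #|D| <= #|shattered_sets D|.
Proof.
have [n] := ubnP #|U|; elim: n U D => // n IHn U D ltUn sDU.
have [U0 | [x xU]] := set_0Vmem U.
- have [-> | [d dD]] := set_0Vmem D; first by rewrite cards0.
  have D1 : D \subset [set set0] by apply/subsetP => e /sDU; rewrite U0 subset0 inE.
  apply: leq_trans (subset_leq_card D1) _; rewrite cards1 card_gt0.
  by apply/set0Pn; exists set0; rewrite inE (shattered_set0 dD).
- have ltUx : #|U :\ x| < n by move: ltUn; rewrite (cardsD1 x U) xU.
  rewrite (card_split D x); apply: leq_trans (card_shattered_split D x).
  apply: leq_add; apply: (IHn (U :\ x)) => // d dS; apply: subset_split sDU _ => //.
  by move: dS; rewrite [d \in _ :&: _]inE => /andP [dO _]; rewrite inE dO.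
Qed.

Theorem pajor D : #|D| <= #|shattered_sets D|.
Proof. by apply: (@pajor_sub setT) => d _; apply: subsetT. Qed.

End Shattering.

Section Representation.
Variables (X : finType) (C : {set {set X}}) (r : {set X} -> {set X}).
Hypothesis rep : representation_map C r.
Implicit Types (W Y c d e : {set X}).

Lemma rep_trace_inj W d e : d \in C -> e \in C -> r d \subset W -> r e \subset W ->
  d :&: W = e :&: W -> d = e.
Proof.
case: rep => _ _ nc dC eC rdW reW deW; apply/eqP; apply: contraT => /(nc d e dC eC).
have sW : r d :|: r e \subset W by rewrite subUset rdW.
by rewrite /restr -(setIidPr sW) !setIA deW eqxx.
Qed.

Lemma card_rep_sub W :
  #|[set d in C | r d \subset W]| = #|[set Y in shattered_sets C | Y \subset W]|.
Proof.
have [r_inj rC _] := rep.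
rewrite -(card_in_imset (f := r)) => [|d e]; last first.
  by rewrite !inE => /andP [dC _] /andP [eC _]; apply: r_inj.
apply: eq_card => Y; rewrite [in RHS]inE -rC.
apply/imsetP/andP => [[d]|[/imsetP [d dC ->] rdW]].
- by rewrite inE => /andP [dC rdW] ->; rewrite imset_f.
- by exists d; rewrite // inE dC.
Qed.

Lemma shattered_trace W Y :
  shattered [set d :&: W | d in C] Y -> shattered C Y && (Y \subset W).
Proof.
move=> shY; have YW : Y \subset W.
  have [_ /imsetP [d _ ->] sYdW] := shattered_subset shY.
  exact: subset_trans sYdW (subsetIr _ _).
rewrite YW andbT; apply/shatteredP => Z /(shatteredP _ _ shY) [_ /imsetP [d dC ->] <-].
by exists d; rewrite // -setIA (setIidPr YW).
Qed.

Lemma rep_trace W c : c \in C ->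
  exists2 d, d \in C & r d \subset W /\ d :&: W = c :&: W.
Proof.
set R := [set d in C | r d \subset W]; move=> cC.
have /eqP traceR : [set d :&: W | d in R] == [set d :&: W | d in C].
  rewrite eqEcard imsetS /=; last by apply/subsetP => d; rewrite inE => /andP [].
  rewrite [X in _ <= X]card_in_imset => [|d e]; last first.
    by rewrite !inE => /andP [dC rdW] /andP [eC reW]; apply: rep_trace_inj.
  rewrite card_rep_sub; apply: leq_trans (pajor _) _; apply: subset_leq_card.
  by apply/subsetP => Y; rewrite !inE; apply: shattered_trace.
have : c :&: W \in [set d :&: W | d in R] by rewrite traceR; apply: imset_f.
by case/imsetP => d; rewrite inE => /andP [dC rdW] cdW; exists d.
Qed.

Lemma rep_flip c y : c \in C -> y \in r c ->
  exists2 e, e \in C & [/\ e :\ y = c :\ y, e != c & y \notin r e].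
Proof.
move=> cC yrc; have [e eC [reW ecW]] := rep_trace (~: [set y]) cC.
have yre : y \notin r e by apply/negP => /(subsetP reW); rewrite !inE eqxx.
exists e => //; split => //; first by rewrite !setDE.
by apply: contraNneq yre => ->.
Qed.

End Representation.

Section Cubes.
Variable X : finType.
Implicit Types (T Y V c d e : {set X}).

Lemma disjoint_setD d Y : [disjoint d :\: Y & Y].
Proof. by rewrite disjoints_subset setDE subsetIr. Qed.

Lemma mem_cube T Y d : [disjoint T & Y] -> (d \in cube T Y) = (d :\: Y == T).
Proof.
move=> TY; apply/imsetP/eqP => [[Z]|<-].
- rewrite powersetE => sZY ->; rewrite setDUl (setDidPl TY).
  by move: sZY; rewrite -setD_eq0 => /eqP ->; rewrite setU0.
- by exists (d :&: Y); rewrite ?powersetE ?subsetIr // setUC setID.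
Qed.

Lemma cube_agree T Y d e x : [disjoint T & Y] -> d \in cube T Y -> e \in cube T Y ->
  x \notin Y -> (x \in d) = (x \in e).
Proof.
move=> TY; rewrite !mem_cube // => /eqP dT /eqP eT xY.
by move/setP/(_ x): (etrans dT (esym eT)); rewrite !inE xY.
Qed.

Lemma symdiff_flip d e y : e :\ y = d :\ y -> e != d -> (d :\: e) :|: (e :\: d) = [set y].
Proof.
move=> /setP ed ne; apply/setP => z; rewrite !inE.
have edz x : x != y -> (x \in e) = (x \in d) by move=> xy; move: (ed x); rewrite !inE xy.
case: (eqVneq z y) => [->|zy]; last by rewrite edz // andNb.
have: (y \in e) != (y \in d).
  apply: contra_neq ne => eyd; apply/setP => x.
  by case: (eqVneq x y) => [->|/edz].
by case: (y \in e) (y \in d) => [] [].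
Qed.

Lemma card_cube T Y : #|cube T Y| <= 2 ^ #|Y|.
Proof. by rewrite -card_powerset leq_imset_card. Qed.

Lemma trace_cube_full (C : {set {set X}}) c Y Y' V :
  Y' \subset Y -> V \subset Y' -> cube (c :\: Y') Y' \subset C ->
  [set d :&: V | d in cube (c :\: Y) Y :&: C] = powerset V.
Proof.
move=> sY'Y sVY' cubeY'; apply/eqP; rewrite eqEsubset; apply/andP; split.
  by apply/subsetP => _ /imsetP [d _ ->]; rewrite powersetE subsetIr.
apply/subsetP => Z; rewrite powersetE => sZV.
have pC : c :\: Y' :|: Z \in C.
  by apply: (subsetP cubeY'); apply: imset_f; rewrite powersetE (subset_trans sZV).
apply/imsetP; exists (c :\: Y' :|: Z).
  have ZY : Z :\: Y = set0.
    by apply/eqP; rewrite setD_eq0 (subset_trans sZV) ?(subset_trans sVY').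
  by rewrite inE mem_cube ?disjoint_setD // pC setDUl setDDl (setUidPr sY'Y) ZY setU0 eqxx.
have cV : [disjoint c :\: Y' & V] := disjointWr sVY' (disjoint_setD _ _).
by rewrite setIUl (disjoint_setI0 cV) set0U (setIidPl sZV).
Qed.

End Cubes.

Section LevelCount.
Variables (X I : finType) (F : {set I}) (g : I -> {set X}).
Implicit Types U V : {set X}.

Let low V := [set d in F | g d \subset V].
Let level V := [set d in F | g d == V].

Lemma card_low V : #|low V| = \sum_(U in powerset V) #|level U|.
Proof.
rewrite -sum1_card (partition_big g (fun U => U \in powerset V)) => [|d]; last first.
  by rewrite inE powersetE => /andP [].
apply: eq_bigr => U; rewrite powersetE => sUV; rewrite sum1dep_card.
apply: eq_card => d; rewrite !inE.
by case: eqP => [->|]; rewrite ?andbF ?andbT // sUV andbT.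
Qed.

Lemma card_low_proper V : (forall U, U \proper V -> #|level U| = 1) ->
  #|low V| = #|level V| + (2 ^ #|V|).-1.
Proof.
move=> level1; rewrite card_low (bigD1 V) ?powersetE //=; congr (_ + _).
rewrite (eq_bigr (fun _ => 1)) => [|U /andP [sUV nUV]]; last first.
  by apply: level1; rewrite properEneq nUV -powersetE.
rewrite sum1dep_card -card_powerset (cardsD1 V (powerset V)) powersetE subxx add1n /=.
by apply: eq_card => U; rewrite !inE andbC.
Qed.

Lemma card_level1 V : (forall U, U \subset V -> #|low U| = 2 ^ #|U|) -> #|level V| = 1.
Proof.
have [n] := ubnP #|V|; elim: n V => // n IHn V ltVn lowV.
have level1 U : U \proper V -> #|level U| = 1.
  move=> pUV; apply: IHn => [|W sWU]; first exact: leq_trans (proper_card pUV) _.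
  by apply: lowV; apply: subset_trans sWU (proper_sub pUV).
move/eqP: (card_low_proper level1); rewrite lowV //.
by rewrite -{1}(prednK (expn_gt0 2 #|V|)) -add1n eqn_add2r eq_sym => /eqP.
Qed.

End LevelCount.

Section RepresentationCubes.
Variables (X : finType) (C : {set {set X}}) (r : {set X} -> {set X}).
Hypothesis rep : representation_map C r.
Implicit Types (T Y V c d : {set X}).

Lemma card_low_rep T Y V : [disjoint T & Y] -> V \subset Y ->
  #|[set d in cube T Y :&: C | r d :&: Y \subset V]| =
  #|[set d :&: V | d in cube T Y :&: C]|.
Proof.
move=> TY sVY; set F := cube T Y :&: C; set W := ~: Y :|: V.
have lowW d : (r d :&: Y \subset V) = (r d \subset W) by rewrite /W -subDset setDE setCK.
have traceW d : d :&: W = (d :\: Y) :|: (d :&: V) by rewrite setIUr setDE.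
have inF d : (d \in F) = (d :\: Y == T) && (d \in C) by rewrite inE mem_cube.
rewrite -[LHS](card_in_imset (f := fun d => d :&: V)) => [|d e]; last first.
  rewrite !inE !lowW !mem_cube //.
  move=> /andP [/andP [/eqP dT dC] rdW] /andP [/andP [/eqP eT eC] reW] deV.
  by apply: (rep_trace_inj rep dC eC rdW reW); rewrite !traceW dT eT deV.
apply/eq_card/subset_eqP; rewrite imsetS /=; last first.
  by apply/subsetP => d; rewrite inE => /andP [].
apply/subsetP => _ /imsetP [c cF ->]; move: cF; rewrite inF => /andP [/eqP cT cC].
have [d dC [rdW dcW]] := rep_trace rep W cC.
have dT : d :\: Y = T.
  by rewrite -cT !setDE -(setIidPr (subsetUl (~: Y) V)) !setIA dcW.
have -> : c :&: V = d :&: V by rewrite -(setIidPr (subsetUr (~: Y) V)) !setIA dcW.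
by apply/imsetP; exists d; rewrite // inE inF dT eqxx dC lowW.
Qed.

Lemma rep_cube_sub c Y : c \in C -> Y \subset r c -> cube (c :\: Y) Y \subset C.
Proof.
have [n] := ubnP #|Y|; elim: n c Y => // n IHn c Y ltYn cC sYrc.
set T := c :\: Y; set F := cube T Y :&: C; have TY : [disjoint T & Y] := disjoint_setD c Y.
have traceF V : V \proper Y -> [set d :&: V | d in F] = powerset V.
  case/properP => sVY [y yY yV]; apply: (trace_cube_full (Y' := Y :\ y)).
  - exact: subsetDl.
  - by rewrite subsetD1 sVY yV.
  - apply: IHn cC (subset_trans (subsetDl _ _) sYrc).
    by move: ltYn; rewrite (cardsD1 y Y) yY.
have level1 V : V \proper Y -> #|[set d in F | r d :&: Y == V]| = 1.
  move=> pVY; apply: card_level1 => U sUV.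
  have pUY := sub_proper_trans sUV pVY.
  by rewrite card_low_rep ?(proper_sub pUY) // traceF // card_powerset.
have cY : c \in [set d in F | r d :&: Y == Y].
  by rewrite !inE mem_cube // eqxx cC (setIidPr sYrc) eqxx.
have lowY : [set d in F | r d :&: Y \subset Y] = F.
  by apply/setP => d; rewrite inE subsetIr andbT.
have cardF : 2 ^ #|Y| <= #|F|.
  rewrite -lowY (card_low_proper level1) -{1}(prednK (expn_gt0 2 #|Y|)) -add1n leq_add2r.
  by rewrite card_gt0; apply/set0Pn; exists c.
have /eqP <- : F == cube T Y by rewrite eqEcard subsetIl (leq_trans (card_cube T Y)).
exact: subsetIr.
Qed.

Lemma cube_sink0 T Y : cube_of C T Y -> exists! c, c \in cube T Y /\ r c :&: Y = set0.
Proof.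
case/andP => TY sQC; set F := cube T Y :&: C.
have TQ : T \in cube T Y by rewrite mem_cube // (setDidPl TY).
have TF : T \in F by rewrite inE TQ (subsetP sQC).
have /cards1P [c Ec] : #|[set d in F | r d :&: Y \subset set0]| == 1.
  rewrite card_low_rep ?sub0set //; apply/cards1P; exists set0; apply/setP => Z.
  rewrite inE; apply/imsetP/eqP => [[d _ ->]|->]; first exact: setI0.
  by exists T; rewrite ?setI0.
have inE0 d : (d \in cube T Y /\ r d :&: Y = set0) <-> d \in [set c].
  rewrite -Ec !inE subset0; split => [[dQ /eqP ->]|/andP [/andP [dQ _] /eqP //]].
  by rewrite dQ (subsetP sQC).
exists c; split => [|d /inE0]; first by apply/inE0; rewrite set11.
by rewrite inE => /eqP.
Qed.

Lemma sink_cube T Y d : cube_of C T Y -> d \in cube T Y ->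
  sink r (cube T Y) d <-> r d :&: Y = set0.
Proof.
case/andP => TY sQC dQ; split => [[_ dsink]|rdY].
- apply/eqP; apply: contraT => /set0Pn [y]; rewrite inE => /andP [yrd yY].
  have [e eC [ed ned yre]] := rep_flip rep (subsetP sQC d dQ) yrd.
  have eQ : e \in cube T Y.
    move: dQ; rewrite !mem_cube // -(setUidPr (_ : [set y] \subset Y)) ?sub1set //.
    by rewrite -!setDDl ed.
  by case: (dsink e eQ); exists y; split; [apply: symdiff_flip | rewrite inE yre yrd].
- split => // e eQ [x [dex /setDP [xrd _]]].
  have xY : x \in Y.
    apply: contraT => xY; move/setP/(_ x): dex; rewrite !inE eqxx.
    by rewrite (cube_agree TY dQ eQ xY) andNb.
  by move/setP/(_ x): rdY; rewrite !inE xrd xY.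
Qed.

Lemma cube_unique_sink T Y : cube_of C T Y -> exists! c, sink r (cube T Y) c.
Proof.
move=> QC; have [c [[cQ rcY] sink0_uniq]] := cube_sink0 QC.
exists c; split => [|d dsink]; first exact/(sink_cube QC cQ).
by apply: sink0_uniq; split; [case: dsink | apply/(sink_cube QC); case: dsink].
Qed.

Lemma cube_USO T Y : cube_of C T Y -> USO_on r T Y.
Proof.
case/andP => _ sQC T' Y' TY' sQ'Q; apply: cube_unique_sink.
by rewrite /cube_of TY' (subset_trans sQ'Q sQC).
Qed.

End RepresentationCubes.

Theorem corollary6p2 (X : finType) (C : {set {set X}}) (r : {set X} -> {set X}) :
  ample C -> representation_map C r ->
  (* (C1) *)
  (forall c, c \in C -> cube (c :\: r c) (r c) \subset C) /\
  (* (C2) *)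
  (forall T Y, cube_of C T Y ->
     (exists! c, c \in cube T Y /\ r c :&: Y = set0) /\
     (exists! c, sink r (cube T Y) c) /\
     USO_on r T Y).
Proof.
move=> _ rep; split=> [c cC | T Y QC].
- by apply: (rep_cube_sub rep cC).
- split; last split.
  + exact (cube_sink0 rep QC).
  + exact (cube_unique_sink rep QC).
  + exact (cube_USO rep QC).
Qed.
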